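(* Let $\eta>0$ and let $I=[u,u+\eta]$ and $J=[v,v+\eta]$ be two intervals contained in $[0,1]$. Then for all sufficiently large $n$ there exists an integer $a$ such that $$\frac{a}{F_n}\in I,\qquad \left\{\frac{F_{n-1}a}{F_n}\right\}\in J,\qquad 1\leqslant a<F_n,\qquad \gcd(a,F_n)=1.$$
   Context: $F_n$ denotes the $n$-th Fibonacci number ($F_1=F_2=1$, $F_{n+1}=F_n+F_{n-1}$). For a real number $t$, $\{t\}$ denotes its fractional part. *)

From Stdlib Require Import Reals Lra Lia Arith.
Open Scope R_scope.

Fixpoint fib (n : nat) : nat :=
  match n with
  | O => O
  | S m => match m with
           | O => 1%nat
           | S k => (fib m + fib k)%nat
           end
  end.

From Stdlib Require Import Reals Lra Lia Arith ZArith Znumtheory List.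
Import ListNotations.

(* Write n = (p + 1) + (j + 2) with j in {p, p + 1}.  By d'Ocagne's identity, multiplication
   by F_(n-1) modulo F_n sends a = x F_(p+1) + y F_(p+2) to (-1)^p (x F_(j+2) - y F_(j+1)), and all
   four Fibonacci factors are O(sqrt F_n).  Solving this 2x2 system for (x, y) and rounding
   puts (a, F_(n-1) a mod F_n) within O(sqrt F_n) of any prescribed target.  Since F_(p+1) is
   invertible modulo F_n, a + k F_(p+1) is coprime to F_n as soon as k + c is (c fixed), and
   Legendre's sieve finds such a k below 4^omega(F_n) = O(F_n^(1/4)).  The total error
   O(F_n^(3/4)) is o(F_n), so for large n the point (a / F_n, {F_(n-1) a / F_n}) lands in any
   square of side eta. *)

Open Scope bool_scope.
Open Scope Z_scope.

Definition sieved (P : list Z) (x : Z) : bool :=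
  forallb (fun p => negb (x mod p =? 0)) P.

Fixpoint count_below (f : nat -> bool) (K : nat) : nat :=
  match K with
  | O => O
  | S K' => (count_below f K' + if f K' then 1 else 0)%nat
  end.

Definition count_sieved (P : list Z) (c : Z) (K : nat) : nat :=
  count_below (fun k => sieved P (c + Z.of_nat k)) K.

Lemma count_below_split (f g : nat -> bool) (K : nat) :
  (count_below (fun k => negb (g k) && f k) K + count_below (fun k => g k && f k) K
   = count_below f K)%nat.
Proof. induction K as [|K IH]; simpl; [reflexivity|]. destruct (f K), (g K); simpl; lia. Qed.

Lemma count_below_pos (f : nat -> bool) (K : nat) :
  (0 < count_below f K)%nat -> exists k, (k < K)%nat /\ f k = true.
Proof.
  induction K as [|K IH]; simpl; [lia|].
  destruct (f K) eqn:E; intros H.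
  - exists K; split; [lia | exact E].
  - destruct IH as [k [Hk Hf]]; [lia|]. exists k; split; [lia | exact Hf].
Qed.

Lemma mod_eqb_0_iff (p x : Z) : p <> 0 -> (x mod p =? 0) = true <-> (p | x).
Proof. intros Hp. rewrite Z.eqb_eq. exact (Z.mod_divide x p Hp). Qed.

Lemma prime_divide_prime_mul (p q y : Z) :
  prime p -> prime q -> p <> q -> (p | q * y) <-> (p | y).
Proof.
  intros Hp Hq Hpq. split.
  - intros H. destruct (prime_mult p Hp q y H) as [Hd|Hd]; [|exact Hd].
    exfalso. apply Hpq. exact (prime_div_prime p q Hp Hq Hd).
  - intros H. apply Z.divide_mul_r. exact H.
Qed.

Lemma sieved_prime_mul (q : Z) (P : list Z) (y : Z) :
  prime q -> ~ In q P -> (forall p, In p P -> prime p) ->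
  sieved P (q * y) = sieved P y.
Proof.
  intros Hq. induction P as [|p P IH]; intros Hn HP; [reflexivity|]. simpl.
  assert (Hp : prime p) by (apply HP; left; reflexivity).
  assert (Hp0 : p <> 0) by (pose proof (prime_ge_2 p Hp); lia).
  rewrite IH; [| intros E; apply Hn; right; exact E | intros; apply HP; right; assumption].
  f_equal. f_equal. apply Bool.eq_iff_eq_true.
  rewrite !mod_eqb_0_iff by exact Hp0.
  apply prime_divide_prime_mul; [exact Hp | exact Hq |].
  intros E. apply Hn. left. exact E.
Qed.

Lemma count_sieved_multiples (q : Z) (P : list Z) (c j0 : Z) :
  prime q -> ~ In q P -> (forall p, In p P -> prime p) -> c <= q * j0 < c + q ->
  forall K : nat, exists M : nat,
    count_below (fun k => ((c + Z.of_nat k) mod q =? 0) && sieved P (c + Z.of_nat k)) K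
      = count_sieved P j0 M /\
    c + Z.of_nat K <= q * (j0 + Z.of_nat M) < c + Z.of_nat K + q.
Proof.
  intros Hq Hn HP Hj. pose proof (prime_ge_2 q Hq).
  induction K as [|K [M [HM HB]]]; [exists O; unfold count_sieved; simpl; lia|].
  simpl count_below.
  destruct ((c + Z.of_nat K) mod q =? 0) eqn:E.
  - apply (mod_eqb_0_iff q) in E; [|lia]. destruct E as [t Ht].
    assert (Heq : q * (j0 + Z.of_nat M) = c + Z.of_nat K).
    { rewrite Ht in HB |- *. assert (t <= j0 + Z.of_nat M < t + 1) by nia. nia. }
    exists (S M). unfold count_sieved in *. simpl count_below.
    rewrite <- HM, <- Heq, sieved_prime_mul by assumption.
    split; [reflexivity | lia].
  - exists M. split; [simpl; lia|].
    assert (q * (j0 + Z.of_nat M) <> c + Z.of_nat K).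
    { intros Heq. rewrite <- Heq, Z.mul_comm, Z.mod_mul in E by lia. discriminate. }
    lia.
Qed.

Open Scope R_scope.

Fixpoint sieve_density (P : list Z) : R :=
  match P with
  | [] => 1
  | q :: P' => (1 - / IZR q) * sieve_density P'
  end.

Lemma sieve_density_bounds (P : list Z) :
  (forall p, In p P -> prime p) -> (1/2) ^ length P <= sieve_density P <= 1.
Proof.
  induction P as [|q P IH]; intros HP; simpl; [lra|].
  assert (Hq : 2 <= IZR q) by (apply IZR_le, prime_ge_2, HP; left; reflexivity).
  destruct IH as [IH1 IH2]; [intros; apply HP; right; assumption|].
  assert (0 < / IZR q <= 1/2).
  { split; [apply Rinv_0_lt_compat; lra|].
    unfold Rdiv. rewrite Rmult_1_l. apply Rinv_le_contravar; lra. }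
  assert (0 < (1/2) ^ length P) by (apply pow_lt; lra).
  split; nra.
Qed.

Lemma sieve_error_step (S1 S2 K M q r e : R) :
  2 <= q -> K - q < q * M < K + q -> 0 <= r <= 1 ->
  Rabs (S1 - K * r) <= e -> Rabs (S2 - M * r) <= e ->
  Rabs ((S1 - S2) - K * ((1 - / q) * r)) <= 2 * e + 1.
Proof.
  intros Hq HM Hr H1 H2.
  assert (HMK : Rabs (M - K * / q) <= 1).
  { assert (E : M - K * / q = (q * M - K) * / q) by (field; lra).
    assert (0 < / q) by (apply Rinv_0_lt_compat; lra).
    rewrite E, Rabs_mult, (Rabs_right (/ q)) by lra.
    assert (Rabs (q * M - K) <= q) by (apply Rabs_le; lra).
    replace 1 with (q * / q) by (field; lra). nra. }
  replace ((S1 - S2) - K * ((1 - / q) * r))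
    with ((S1 - K * r) - (S2 - M * r) - (M - K * / q) * r) by ring.
  assert (Rabs ((M - K * / q) * r) <= 1).
  { rewrite Rabs_mult, (Rabs_right r) by lra. nra. }
  pose proof (Rabs_triang (S1 - K * r - (S2 - M * r)) (- ((M - K * / q) * r))).
  pose proof (Rabs_triang (S1 - K * r) (- (S2 - M * r))).
  rewrite !Rabs_Ropp in *. unfold Rminus in *. lra.
Qed.

(* Legendre's sieve: removing the multiples of one more prime q at most
   doubles the error, since the multiples of q in a window of length K are
   q times a window of length K/q + O(1). *)
Lemma sieve_error (P : list Z) :
  NoDup P -> (forall p, In p P -> prime p) -> forall (c : Z) (K : nat),
  Rabs (INR (count_sieved P c K) - INR K * sieve_density P) <= 2 ^ length P - 1.
Proof.
  induction P as [|q P IH]; intros HN HP c K.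
  - assert (E : count_sieved [] c K = K).
    { unfold count_sieved. induction K as [|K IHK]; simpl in *; lia. }
    rewrite E. simpl. rewrite Rmult_1_r, Rminus_diag, Rabs_R0. lra.
  - apply NoDup_cons_iff in HN. destruct HN as [Hn HN].
    assert (HP' : forall p, In p P -> prime p) by (intros; apply HP; right; assumption).
    assert (Hq : prime q) by (apply HP; left; reflexivity).
    pose proof (prime_ge_2 q Hq) as Hq2.
    set (j0 := ((c + q - 1) / q)%Z).
    assert (Hj : (c <= q * j0 < c + q)%Z).
    { pose proof (Z.div_mod (c + q - 1) q ltac:(lia)).
      pose proof (Z.mod_pos_bound (c + q - 1) q ltac:(lia)). lia. }
    destruct (count_sieved_multiples q P c j0 Hq Hn HP' Hj K) as [M [HM HB]].
    assert (E : INR (count_sieved (q :: P) c K)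
                = INR (count_sieved P c K) - INR (count_sieved P j0 M)).
    { assert (Hs : (count_sieved (q :: P) c K + count_sieved P j0 M = count_sieved P c K)%nat)
        by (rewrite <- HM; exact (count_below_split _ _ K)).
      rewrite <- Hs, plus_INR. ring. }
    assert (HqM : INR K - IZR q < IZR q * INR M < INR K + IZR q).
    { rewrite !INR_IZR_INZ, <- mult_IZR, <- minus_IZR, <- plus_IZR. split; apply IZR_lt; lia. }
    assert (Hr : 0 <= sieve_density P <= 1).
    { pose proof (sieve_density_bounds P HP').
      pose proof (pow_lt (1/2) (length P) ltac:(lra)). lra. }
    rewrite E. simpl sieve_density. simpl length.
    pose proof (sieve_error_step _ _ _ _ (IZR q) _ _ ltac:(apply IZR_le; lia) HqM Hr
      (IH HN HP' c K) (IH HN HP' j0 M)).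
    simpl. lra.
Qed.

Lemma exists_sieved_in_window (P : list Z) :
  NoDup P -> (forall p, In p P -> prime p) -> forall (c : Z) (K : nat),
  (4 ^ length P <= K)%nat -> exists k : nat, (k < K)%nat /\ sieved P (c + Z.of_nat k) = true.
Proof.
  intros HN HP c K HK.
  apply count_below_pos.
  pose proof (sieve_error P HN HP c K) as Herr.
  destruct (sieve_density_bounds P HP) as [Hr _].
  apply le_INR in HK. rewrite pow_INR in HK. replace (INR 4) with 4 in HK by (simpl; ring).
  assert (H4 : 4 ^ length P * (1/2) ^ length P = 2 ^ length P).
  { rewrite <- Rpow_mult_distr. f_equal. field. }
  assert (0 < (1/2) ^ length P) by (apply pow_lt; lra).
  assert (2 ^ length P <= INR K * sieve_density P).
  { rewrite <- H4. apply Rmult_le_compat; [apply pow_le; lra | lra | exact HK | exact Hr]. }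
  apply INR_lt. simpl.
  pose proof (Rle_abs (- (INR (count_sieved P c K) - INR K * sieve_density P))) as Habs.
  rewrite Rabs_Ropp in Habs. unfold count_sieved in *. lra.
Qed.

Open Scope Z_scope.

Definition prodZ (P : list Z) : Z := fold_right Z.mul 1 P.

Lemma prime_divisor_exists (N : Z) : 1 < N -> exists p, prime p /\ (p | N).
Proof.
  intros HN. assert (H0 : 0 <= N) by lia. revert HN. pattern N. apply Z_lt_induction; [|exact H0].
  intros x IH Hx. destruct (prime_dec x) as [Hp|Hp].
  - exists x. split; [exact Hp | apply Z.divide_refl].
  - destruct (not_prime_divide x Hx Hp) as [m [Hm Hmx]].
    destruct (IH m ltac:(lia) ltac:(lia)) as [p [Hp' Hpm]].
    exists p. split; [exact Hp' | exact (Z.divide_trans _ _ _ Hpm Hmx)].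
Qed.

Lemma prime_factor_list (N : Z) : 1 <= N ->
  exists P, NoDup P /\ (forall p, In p P -> prime p) /\ prodZ P <= N /\
    (forall x, (forall p, In p P -> ~ (p | x)) -> rel_prime x N).
Proof.
  intros HN. assert (H0 : 0 <= N) by lia. revert HN. pattern N. apply Z_lt_induction; [|exact H0].
  clear N H0. intros N IH HN.
  destruct (Z.eq_dec N 1) as [->|HN1].
  { exists []. split; [constructor|]. split; [intros p []|]. split; [simpl; lia|].
    intros x _. apply rel_prime_sym, rel_prime_1. }
  destruct (prime_divisor_exists N ltac:(lia)) as [p [Hp [N' HN']]].
  pose proof (prime_ge_2 p Hp).
  destruct (IH N' ltac:(nia) ltac:(nia)) as [P [HPN [HPp [HPprod HPrel]]]].
  assert (Hrel : forall x, ~ (p | x) -> rel_prime x N' -> rel_prime x N).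
  { intros x Hx Hx'. rewrite HN'. apply rel_prime_mult; [exact Hx'|].
    apply rel_prime_sym, prime_rel_prime; assumption. }
  destruct (In_dec Z.eq_dec p P) as [Hi|Hi].
  - exists P. split; [assumption|]. split; [assumption|]. split; [nia|].
    intros x Hx. apply Hrel; [apply Hx; exact Hi | apply HPrel; exact Hx].
  - exists (p :: P). split; [|split; [|split]].
    + constructor; assumption.
    + intros q [<-|Hq]; [exact Hp | apply HPp; exact Hq].
    + simpl. nia.
    + intros x Hx. apply Hrel; [apply Hx; left; reflexivity|].
      apply HPrel. intros q Hq. apply Hx. right. exact Hq.
Qed.

Lemma pow256_length_le (P : list Z) : (forall p, In p P -> 2 <= p) ->
  256 ^ Z.of_nat (length P) <= 256 ^ Z.of_nat (length (filter (fun p => p <? 256) P)) * prodZ P.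
Proof.
  induction P as [|p P IH]; intros HP; [simpl; lia|].
  assert (Hp : 2 <= p) by (apply HP; left; reflexivity).
  specialize (IH ltac:(intros; apply HP; right; assumption)).
  assert (0 <= 256 ^ Z.of_nat (length P)) by (apply Z.pow_nonneg; lia).
  change (prodZ (p :: P)) with (p * prodZ P). cbn [length filter].
  rewrite Nat2Z.inj_succ, Z.pow_succ_r by lia.
  destruct (p <? 256) eqn:E; cbn [length].
  - rewrite Nat2Z.inj_succ, Z.pow_succ_r by lia. nia.
  - apply Z.ltb_ge in E. nia.
Qed.

Lemma length_filter_lt_256_le (P : list Z) :
  NoDup P -> (forall p, In p P -> 2 <= p) ->
  (length (filter (fun p => (p <? 256)%Z) P) <= 256)%nat.
Proof.
  intros HN HP.
  replace 256%nat with (length (map Z.of_nat (seq 0 256)))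
    by (rewrite length_map, length_seq; reflexivity).
  apply NoDup_incl_length; [apply NoDup_filter; exact HN|].
  intros x Hx. apply filter_In in Hx. destruct Hx as [Hx1 Hx2].
  apply Z.ltb_lt in Hx2. pose proof (HP x Hx1).
  apply in_map_iff. exists (Z.to_nat x). split; [lia | apply in_seq; lia].
Qed.

Lemma coprime_in_every_window (N : Z) : 1 <= N ->
  exists K, 1 <= K /\ K ^ 4 <= 256 ^ 256 * N /\
    forall c, exists k, 0 <= k < K /\ Z.gcd (c + k) N = 1.
Proof.
  intros HN.
  destruct (prime_factor_list N HN) as [P [HPN [HPp [HPprod HPrel]]]].
  assert (HP2 : forall p, In p P -> 2 <= p) by (intros p Hp; apply prime_ge_2, HPp, Hp).
  exists (Z.of_nat (4 ^ length P)).
  rewrite Nat2Z.inj_pow. split; [|split].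
  - assert (0 < 4 ^ Z.of_nat (length P)) by (apply Z.pow_pos_nonneg; lia). lia.
  - rewrite <- Z.pow_mul_r, Z.mul_comm, Z.pow_mul_r by lia.
    pose proof (pow256_length_le P HP2) as Hpow.
    pose proof (length_filter_lt_256_le P HPN HP2) as Hs.
    set (s := length (filter (fun p => p <? 256) P)) in *.
    assert (Hs' : 256 ^ Z.of_nat s <= 256 ^ 256) by (apply Z.pow_le_mono_r; lia).
    assert (0 < 256 ^ Z.of_nat s) by (apply Z.pow_pos_nonneg; lia).
    assert (0 < 256 ^ Z.of_nat (length P)) by (apply Z.pow_pos_nonneg; lia).
    assert (0 < prodZ P) by nia.
    change (4 ^ 4) with 256. transitivity (256 ^ Z.of_nat s * prodZ P); [exact Hpow|].
    apply Z.mul_le_mono_nonneg; lia.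
  - intros c.
    destruct (exists_sieved_in_window P HPN HPp c (4 ^ length P) (Nat.le_refl _)) as [k [Hk Hsv]].
    exists (Z.of_nat k). split; [split; [lia|]|].
    + rewrite <- Nat2Z.inj_pow. lia.
    + apply Zgcd_1_rel_prime, HPrel. intros p Hp Hdiv.
      unfold sieved in Hsv. rewrite forallb_forall in Hsv.
      specialize (Hsv p Hp). apply (mod_eqb_0_iff p) in Hdiv; [|specialize (HP2 p Hp); lia].
      rewrite Hdiv in Hsv. discriminate.
Qed.

Lemma coprime_shift (N A a K : Z) : Z.gcd A N = 1 ->
  (forall c, exists k, 0 <= k < K /\ Z.gcd (c + k) N = 1) ->
  exists k, 0 <= k < K /\ Z.gcd (a + k * A) N = 1.
Proof.
  intros HA Hwin.
  destruct (Z.gcd_bezout A N 1 HA) as [u [w Huw]].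
  destruct (Hwin (u * a)) as [k [Hk Hg]].
  exists k. split; [exact Hk|].
  (* [u] inverts [A] modulo [N], so [a + k A] is [A (u a + k)] up to a multiple of [N]. *)
  replace (a + k * A) with (A * (u * a + k) + (w * a) * N)
    by (transitivity (a * (u * A + w * N) + k * A); [ring | rewrite Huw; ring]).
  rewrite Z.gcd_comm, Z.gcd_add_mult_diag_r, Z.gcd_comm.
  apply Zgcd_1_rel_prime, rel_prime_sym, rel_prime_mult;
    apply rel_prime_sym, Zgcd_1_rel_prime; assumption.
Qed.

(* Rounding down the real solution (x, y) of x A0 + y A1 = al, s (x B0 - y B1) = be,
   whose determinant is -s N. *)
Lemma lattice_approx (N A0 A1 B0 B1 s al be : Z) :
  N = A1 * B0 + A0 * B1 -> 0 < N -> s * s = 1 ->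
  0 <= A0 -> 0 <= A1 -> 0 <= B0 -> 0 <= B1 ->
  exists x y, al - (A0 + A1) < x * A0 + y * A1 <= al /\
              Z.abs (s * (x * B0 - y * B1) - be) < B0 + B1.
Proof.
  intros HN HN0 Hs HA0 HA1 HB0 HB1.
  set (X := B1 * al + A1 * s * be). set (Y := B0 * al - A0 * s * be).
  exists (X / N), (Y / N).
  pose proof (Z.div_mod X N ltac:(lia)). pose proof (Z.mod_pos_bound X N HN0).
  pose proof (Z.div_mod Y N ltac:(lia)). pose proof (Z.mod_pos_bound Y N HN0).
  set (d1 := X mod N) in *. set (d2 := Y mod N) in *.
  assert (Ea : N * (X / N * A0 + Y / N * A1 - al) = - (A0 * d1 + A1 * d2)).
  { transitivity ((N * (X / N)) * A0 + (N * (Y / N)) * A1 - N * al); [ring|].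
    replace (N * (X / N)) with (X - d1) by lia. replace (N * (Y / N)) with (Y - d2) by lia.
    unfold X, Y. rewrite HN. ring. }
  assert (EV : N * (s * (X / N * B0 - Y / N * B1) - be) = - s * (B0 * d1 - B1 * d2)).
  { transitivity (s * ((N * (X / N)) * B0 - (N * (Y / N)) * B1) - N * be); [ring|].
    replace (N * (X / N)) with (X - d1) by lia. replace (N * (Y / N)) with (Y - d2) by lia.
    unfold X, Y. rewrite HN.
    transitivity (- s * (B0 * d1 - B1 * d2) + (s * s - 1) * (A1 * B0 + A0 * B1) * be); [ring|].
    rewrite Hs. ring. }
  assert (HApos : 0 < A0 + A1) by nia.
  assert (HBpos : 0 < B0 + B1) by nia.
  assert (Ha : - ((A0 + A1) * N) < N * (X / N * A0 + Y / N * A1 - al) <= 0) by nia.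
  assert (HV : Z.abs (N * (s * (X / N * B0 - Y / N * B1) - be)) < (B0 + B1) * N).
  { rewrite EV, Z.abs_mul. assert (Hsa : Z.abs (- s) = 1) by nia. rewrite Hsa.
    apply Z.abs_lt. nia. }
  rewrite Z.abs_mul, (Z.abs_eq N) in HV by lia.
  split; [split|]; nia.
Qed.

Lemma fib_SS (k : nat) : fib (S (S k)) = (fib (S k) + fib k)%nat.
Proof. reflexivity. Qed.

Lemma fib_succ_pos (k : nat) : (0 < fib (S k))%nat.
Proof.
  induction k as [|k IH]; [simpl; lia|]. rewrite fib_SS. lia.
Qed.

Lemma fib_ge_pred (n : nat) : (n - 1 <= fib n)%nat.
Proof.
  induction n as [n IH] using lt_wf_ind.
  destruct n as [|[|[|n]]]; [simpl; lia .. |].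
  rewrite fib_SS. pose proof (fib_succ_pos n).
  specialize (IH (S (S n)) ltac:(lia)). lia.
Qed.

Definition fibZ (k : nat) : Z := Z.of_nat (fib k).

Lemma fibZ_SS (k : nat) : fibZ (S (S k)) = fibZ (S k) + fibZ k.
Proof. unfold fibZ. rewrite fib_SS. lia. Qed.

Lemma fibZ_add (a b : nat) : fibZ (S (a + b)) = fibZ (S a) * fibZ (S b) + fibZ a * fibZ b.
Proof.
  revert b. induction a as [|a IH]; intros b.
  - change (fibZ 1) with 1. change (fibZ 0) with 0. rewrite Nat.add_0_l. ring.
  - replace (S a + b)%nat with (a + S b)%nat by lia. rewrite IH, !fibZ_SS. ring.
Qed.

Lemma neg_one_pow_succ (m : nat) : (-1) ^ Z.of_nat (S m) = - (-1) ^ Z.of_nat m.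
Proof. rewrite Nat2Z.inj_succ, Z.pow_succ_r by lia. ring. Qed.

Lemma neg_one_pow_sqr (m : nat) : (-1) ^ Z.of_nat m * (-1) ^ Z.of_nat m = 1.
Proof. rewrite <- Z.pow_mul_l. apply Z.pow_1_l. lia. Qed.

Lemma fibZ_docagne (m j : nat) :
  fibZ (S (m + j)) * fibZ (S m) - fibZ (S (S (m + j))) * fibZ m = (-1) ^ Z.of_nat m * fibZ (S j).
Proof.
  induction m as [|m IH].
  - change (fibZ 1) with 1. change (fibZ 0) with 0. change ((-1) ^ Z.of_nat 0) with 1.
    rewrite Nat.add_0_l. ring.
  - rewrite neg_one_pow_succ, Z.mul_opp_l, <- IH. simpl (S m + j)%nat. rewrite !fibZ_SS. ring.
Qed.

(* The witnesses are A0, A1, B0, B1 = F_(p+1), F_(p+2), F_(j+2), F_(j+1) and s = (-1)^p,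
   where n = p + j + 3 with j in {p, p + 1}; the two congruences are d'Ocagne's identity. *)
Lemma fibZ_decomposition (n : nat) : (3 <= n)%nat ->
  exists A0 A1 B0 B1 Q0 Q1 s : Z,
    fibZ n = A1 * B0 + A0 * B1 /\
    fibZ (n - 1) * A0 = fibZ n * Q0 + s * B0 /\
    fibZ (n - 1) * A1 = fibZ n * Q1 - s * B1 /\
    s * s = 1 /\
    1 <= A0 <= A1 /\ A1 <= B0 <= A0 + A1 /\ A0 <= B1 <= A1 /\
    Z.gcd A0 (fibZ n) = 1.
Proof.
  intros Hn.
  assert (Hpj : exists p j, n = S (S (p + S j)) /\ (j = p \/ j = S p)).
  { destruct (Nat.Even_or_Odd (n - 3)) as [[p Hp] | [p Hp]];
      exists p; [exists p | exists (S p)]; split; lia. }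
  destruct Hpj as [p [j [-> Hj]]].
  replace (S (S (p + S j)) - 1)%nat with (S (p + S j)) by lia.
  set (s := (-1) ^ Z.of_nat p).
  pose proof (fibZ_add (S p) (S j)) as Hadd.
  change (S p + S j)%nat with (S (p + S j)) in Hadd.
  pose proof (fibZ_docagne p (S j)) as HA0.
  pose proof (fibZ_docagne (S p) j) as HA1.
  replace (S p + j)%nat with (p + S j)%nat in HA1 by lia.
  pose proof (fibZ_docagne (S p) 0) as Hcassini.
  rewrite Nat.add_0_r in Hcassini.
  rewrite neg_one_pow_succ in HA1, Hcassini. fold s in HA0, HA1, Hcassini.
  change (fibZ 1) with 1 in Hcassini.
  pose proof (fibZ_SS p). pose proof (fibZ_SS (S p)). pose proof (fibZ_SS (S (S p))).
  assert (1 <= fibZ (S p)) by (pose proof (fib_succ_pos p); unfold fibZ; lia).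
  assert (0 <= fibZ p) by (unfold fibZ; lia).
  assert (Hs : s * s = 1) by apply neg_one_pow_sqr.
  exists (fibZ (S p)), (fibZ (S (S p))), (fibZ (S (S j))), (fibZ (S j)), (fibZ p), (fibZ (S p)), s.
  (* F_(p+1) is invertible modulo F_n by Cassini's identity. *)
  assert (Hm : exists m, fibZ (S (S (p + S j))) = fibZ (S p) * m - s).
  { destruct Hj as [-> | ->];
      [exists (fibZ (S (S p)) + 2 * fibZ (S p)) | exists (3 * fibZ (S (S p)) + fibZ (S p))];
      rewrite Hadd; lia. }
  destruct Hm as [m Hm].
  split; [exact Hadd|]. split; [lia|]. split; [lia|]. split; [exact Hs|].
  split; [|split; [|split]]; [lia | destruct Hj as [-> | ->]; lia .. |].
  apply Z.bezout_1_gcd. exists (s * m), (- s). rewrite Hm. nia.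
Qed.

Lemma error_pow4_le (K G C N : Z) :
  0 <= K -> 0 <= G -> 0 <= C -> K ^ 4 <= C * N -> G * G <= 25 * N ->
  (2 * (K * G)) ^ 4 <= 10000 * C * N ^ 3.
Proof.
  intros HK HG HC HK4 HG2.
  replace ((2 * (K * G)) ^ 4) with (16 * K ^ 4 * (G * G) ^ 2) by ring.
  replace (10000 * C * N ^ 3) with (16 * (C * N) * (25 * N) ^ 2) by ring.
  assert ((G * G) ^ 2 <= (25 * N) ^ 2) by (apply Z.pow_le_mono_l; nia).
  assert (0 <= K ^ 4) by (apply Z.pow_nonneg; lia).
  assert (0 <= (G * G) ^ 2) by (apply Z.pow_nonneg; nia).
  apply Z.mul_le_mono_nonneg; lia.
Qed.

Lemma fibZ_approx (n : nat) (al be : Z) : (3 <= n)%nat ->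
  exists a V Q E : Z,
    0 <= E /\ E ^ 4 <= 10000 * 256 ^ 256 * fibZ n ^ 3 /\
    Z.abs (a - al) <= E /\ Z.abs (V - be) <= E /\
    fibZ (n - 1) * a = fibZ n * Q + V /\ Z.gcd a (fibZ n) = 1.
Proof.
  intros Hn.
  destruct (fibZ_decomposition n Hn)
    as [A0 [A1 [B0 [B1 [Q0 [Q1 [s [HN [HA0 [HA1 [Hs [HA [HB0 [HB1 Hgcd]]]]]]]]]]]]]].
  set (N := fibZ n) in *.
  assert (HN1 : 1 <= N) by nia.
  destruct (lattice_approx N A0 A1 B0 B1 s al be HN ltac:(lia) Hs ltac:(lia) ltac:(lia)
    ltac:(lia) ltac:(lia)) as [x [y [Ha0 HV0]]].
  destruct (coprime_in_every_window N HN1) as [K [HK1 [HK4 Hwin]]].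
  destruct (coprime_shift N A0 (x * A0 + y * A1) K Hgcd Hwin) as [k [Hk Hcop]].
  set (G := A0 + A1 + B0 + B1).
  exists (x * A0 + y * A1 + k * A0), (s * (x * B0 - y * B1) + s * k * B0),
    ((x + k) * Q0 + y * Q1), (2 * (K * G)).
  assert (HkG : 0 <= k * A0 <= K * G /\ 0 <= k * B0 <= K * G) by (unfold G; nia).
  assert (HGKG : G <= K * G) by (unfold G; nia).
  assert (Hsk : Z.abs (s * k * B0) = k * B0).
  { rewrite !Z.abs_mul, (Z.abs_eq k), (Z.abs_eq B0) by lia.
    replace (Z.abs s) with 1 by nia. ring. }
  split; [|split; [|split; [|split; [|split]]]].
  - unfold G in *. lia.
  - apply error_pow4_le; [lia | unfold G; lia | lia | exact HK4 |].
    assert (G <= 5 * A1) by (unfold G; lia).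
    assert (G * G <= (5 * A1) * (5 * A1)) by (apply Z.mul_le_mono_nonneg; unfold G in *; lia).
    assert (A1 * A1 <= A1 * B0) by (apply Z.mul_le_mono_nonneg_l; lia).
    assert (0 <= A0 * B1) by (apply Z.mul_nonneg_nonneg; lia).
    lia.
  - apply Z.abs_le. unfold G in *. lia.
  - replace (s * (x * B0 - y * B1) + s * k * B0 - be)
      with ((s * (x * B0 - y * B1) - be) + s * k * B0) by ring.
    eapply Z.le_trans; [apply Z.abs_triangle|]. rewrite Hsk. unfold G in *. lia.
  - transitivity ((x + k) * (fibZ (n - 1) * A0) + y * (fibZ (n - 1) * A1)); [ring|].
    rewrite HA0, HA1. ring.
  - exact Hcop.
Qed.

Lemma Nat_gcd_eq_1_of_Z_gcd (a b : nat) :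
  Z.gcd (Z.of_nat a) (Z.of_nat b) = 1 -> Nat.gcd a b = 1%nat.
Proof.
  intros H.
  assert (Hdiv : forall d m, Nat.divide d m -> (Z.of_nat d | Z.of_nat m)).
  { intros d m [z ->]. exists (Z.of_nat z). lia. }
  pose proof (Z.gcd_greatest _ _ _
    (Hdiv _ _ (Nat.gcd_divide_l a b)) (Hdiv _ _ (Nat.gcd_divide_r a b))) as Hg.
  rewrite H in Hg. apply Z.divide_1_r_nonneg in Hg; lia.
Qed.

Open Scope R_scope.

Lemma fib_eventually_ge (M : R) : exists N0, forall n, (N0 <= n)%nat -> M <= INR (fib n).
Proof.
  destruct (archimed M) as [HM _].
  exists (S (Z.to_nat (up M))). intros n Hn.
  pose proof (fib_ge_pred n) as Hf.
  apply le_INR in Hf. assert (Hup : (Z.to_nat (up M) <= n - 1)%nat) by lia.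
  apply le_INR in Hup.
  destruct (Z_lt_le_dec (up M) 0) as [Hneg|Hpos].
  - apply IZR_lt in Hneg. pose proof (pos_INR (fib n)). lra.
  - rewrite INR_IZR_INZ, Z2Nat.id in Hup by exact Hpos. lra.
Qed.

Lemma le_mul_of_div_le (a b c : R) : 0 < b -> a / b <= c -> a <= b * c.
Proof. intros Hb H. replace a with (b * (a / b)) by (field; lra). apply Rmult_le_compat_l; lra. Qed.

Lemma div_in_interval (lo hi x N : R) : 0 < N -> lo * N < x < hi * N -> lo < x / N < hi.
Proof.
  intros HN Hx. assert (E : x / N * N = x) by (field; lra).
  split; apply (Rmult_lt_reg_r N); rewrite ?E; lra.
Qed.

Lemma pow4_le_reg (x y : R) : 0 <= x -> 0 <= y -> x ^ 4 <= y ^ 4 -> x <= y.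
Proof.
  intros Hx Hy H. destruct (Rle_lt_dec x y) as [Hle|Hlt]; [exact Hle|].
  assert (y ^ 2 < x ^ 2) by nra.
  assert (0 <= y ^ 2) by nra.
  replace (y ^ 4) with (y ^ 2 * y ^ 2) in H by ring.
  replace (x ^ 4) with (x ^ 2 * x ^ 2) in H by ring. nra.
Qed.

Lemma error_le_quarter (D E N eta : R) :
  0 < eta -> 0 <= E -> 0 < N -> E ^ 4 <= D * N ^ 3 -> 256 * D <= eta ^ 4 * N ->
  E <= eta * N / 4.
Proof.
  intros Heta HE HN HE4 HD. apply pow4_le_reg; [exact HE | nra |].
  assert (0 < N ^ 3) by (apply pow_lt; exact HN).
  replace ((eta * N / 4) ^ 4) with (eta ^ 4 * N * N ^ 3 / 256) by field. nra.
Qed.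

Lemma near_floor_in_window (w eta N x : R) :
  4 <= eta * N -> Rabs (x - IZR (Int_part ((w + eta / 2) * N))) <= eta * N / 4 ->
  w * N < x < (w + eta) * N.
Proof.
  intros H4 Hx. destruct (base_Int_part ((w + eta / 2) * N)) as [Hf1 Hf2].
  split_Rabs; lra.
Qed.

Lemma frac_part_div_eq (m a N Q V : Z) :
  (0 < N)%Z -> (m * a = N * Q + V)%Z -> 0 <= IZR V / IZR N < 1 ->
  frac_part (IZR m * IZR a / IZR N) = IZR V / IZR N.
Proof.
  intros HN HQ HV. symmetry. apply (Int_part_frac_part_spec _ Q _ HV).
  apply IZR_lt in HN. rewrite <- mult_IZR, HQ, plus_IZR, mult_IZR. field. lra.
Qed.

Lemma fib_point_in_box (eta u v : R) (n : nat) :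
  0 < eta -> 0 <= u -> u + eta <= 1 -> 0 <= v -> v + eta <= 1 -> (3 <= n)%nat ->
  256 * IZR (10000 * 256 ^ 256) <= eta ^ 4 * INR (fib n) -> 4 <= eta * INR (fib n) ->
  exists a : nat,
    u <= INR a / INR (fib n) <= u + eta /\
    v <= frac_part (INR (fib (n - 1)) * INR a / INR (fib n)) <= v + eta /\
    (1 <= a < fib n)%nat /\
    Nat.gcd a (fib n) = 1%nat.
Proof.
  intros Heta Hu Hue Hv Hve Hn HDN H4N.
  rewrite !INR_IZR_INZ in *. fold (fibZ n) (fibZ (n - 1)) in *.
  assert (HN : 0 < IZR (fibZ n)) by nra.
  destruct (fibZ_approx n (Int_part ((u + eta / 2) * IZR (fibZ n)))
    (Int_part ((v + eta / 2) * IZR (fibZ n))) Hn)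
    as [a [V [Q [E [HE0 [HE4 [Ha [HV [HQ Hg]]]]]]]]].
  assert (HE : IZR E <= eta * IZR (fibZ n) / 4).
  { apply (error_le_quarter (IZR (10000 * 256 ^ 256)));
      [lra | apply IZR_le, HE0 | exact HN | | exact HDN].
    rewrite !pow_IZR, <- mult_IZR. apply IZR_le. exact HE4. }
  apply IZR_le in Ha, HV. rewrite <- Rabs_Zabs, minus_IZR in Ha, HV.
  assert (Hau : u * IZR (fibZ n) < IZR a < (u + eta) * IZR (fibZ n))
    by (apply near_floor_in_window; lra).
  assert (HVv : v * IZR (fibZ n) < IZR V < (v + eta) * IZR (fibZ n))
    by (apply near_floor_in_window; lra).
  assert (Ha0 : (0 < a)%Z) by (apply lt_IZR; nra).
  assert (HaN : (a < fibZ n)%Z) by (apply lt_IZR; nra).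
  apply div_in_interval in Hau, HVv; [|exact HN ..].
  exists (Z.to_nat a). rewrite INR_IZR_INZ, Z2Nat.id by lia.
  rewrite (frac_part_div_eq (fibZ (n - 1)) a (fibZ n) Q V); [| lia | exact HQ | lra].
  split; [lra|]. split; [lra|]. split; [unfold fibZ in HaN; lia|].
  apply Nat_gcd_eq_1_of_Z_gcd. rewrite Z2Nat.id by lia. exact Hg.
Qed.

Theorem lemma1 :
  forall (eta u v : R),
    0 < eta ->
    0 <= u -> u + eta <= 1 ->
    0 <= v -> v + eta <= 1 ->
    exists N : nat, forall n : nat, (N <= n)%nat ->
      exists a : nat,
        u <= INR a / INR (fib n) <= u + eta /\
        v <= frac_part (INR (fib (n - 1)) * INR a / INR (fib n)) <= v + eta /\
        (1 <= a < fib n)%nat /\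
        Nat.gcd a (fib n) = 1%nat.
Proof.
  intros eta u v Heta Hu Hue Hv Hve.
  destruct (fib_eventually_ge (256 * IZR (10000 * 256 ^ 256) / eta ^ 4)) as [N1 HN1].
  destruct (fib_eventually_ge (4 / eta)) as [N2 HN2].
  exists (max 3 (max N1 N2)). intros n Hn.
  apply fib_point_in_box; try assumption; [lia | |].
  - apply le_mul_of_div_le; [apply pow_lt; lra | apply HN1; lia].
  - apply le_mul_of_div_le; [lra | apply HN2; lia].
Qed.
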